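(* Let $A$ be a commutative ring with $1$ and $M\in\operatorname{Sym}_n(A)$. Then $\Sigma(M)$ is an $A$-submodule of $A^n$.
   Context: $\Sigma A^2$ denotes the set of finite sums of squares of elements of $A$. A matrix $N\in\operatorname{Sym}_n(A)$ is a sum of squares if $N=Q^{t}Q$ for some $Q\in\operatorname{Mat}_{m,n}(A)$ and some $m$, equivalently $N=\sum_{i=1}^m w_iw_i^{t}$ for column vectors $w_i\in A^n$. For $M\in\operatorname{Sym}_n(A)$, $\Sigma(M)$ is the set of column vectors $v\in A^n$ such that $sM=vv^{t}+N$ for some $s\in\Sigma A^2$ and some $N\in\operatorname{Sym}_n(A)$ which is a sum of squares. *)

From HB Require Import structures.
From mathcomp Require Import all_boot all_order all_algebra.
Set Implicit Arguments. Unset Strict Implicit. Unset Printing Implicit Defensive.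
Import GRing.Theory.
Local Open Scope ring_scope.

Definition is_sos_elt (A : comPzRingType) (s : A) : Prop :=
  exists l : seq A, s = \sum_(a <- l) a ^+ 2.

Definition is_symmx (A : comPzRingType) (n : nat) (M : 'M[A]_n) : Prop := M^T = M.

Definition is_sos_mx (A : comPzRingType) (n : nat) (N : 'M[A]_n) : Prop :=
  exists (m : nat) (Q : 'M[A]_(m, n)), N = Q^T *m Q.

Definition Sigma (A : comPzRingType) (n : nat) (M : 'M[A]_n) (v : 'cV[A]_n) : Prop :=
  exists (s : A) (N : 'M[A]_n),
    [/\ is_sos_elt s, is_symmx N, is_sos_mx N & s *: M = v *m v^T + N].

Definition is_submodule (A : comPzRingType) (n : nat) (S : 'cV[A]_n -> Prop) : Prop :=
  [/\ S 0,
      (forall v w, S v -> S w -> S (v + w)) &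
      (forall (a : A) v, S v -> S (a *: v))].

(* The squares v v^T of the defining identities s M = v v^T + N combine via
   the parallelogram law
     (v + w)(v + w)^T + (v - w)(v - w)^T = 2 (v v^T + w w^T):
   adding twice the identities for v and w gives one for v + w, with the
   sum of squares (v - w)(v - w)^T absorbed into N.  Scaling by a multiplies
   the identity by a^2. *)

From HB Require Import structures.
From mathcomp Require Import all_boot all_order all_algebra.
Import GRing.Theory.
Local Open Scope ring_scope.

Lemma outer_parallelogram (R : pzRingType) (m k : nat) (v w : 'M[R]_(m, k)) :
  (v + w) *m (v + w)^T + (v - w) *m (v - w)^T = (v *m v^T + w *m w^T) *+ 2.
Proof.
rewrite raddfD raddfB /= !mulmxDl !mulmxDr !mulmxN !mulNmx opprK.
by rewrite addrACA (addrACA (v *m v^T)) (addrACA (w *m v^T)) !subrr addr0 add0r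
  mulr2n addrACA.
Qed.

Section SumsOfSquares.
Variable A : comPzRingType.

Lemma sos_elt0 : is_sos_elt (0 : A).
Proof. by exists [::]; rewrite big_nil. Qed.

Lemma sos_eltD (s t : A) : is_sos_elt s -> is_sos_elt t -> is_sos_elt (s + t).
Proof. by move=> [l ->] [l' ->]; exists (l ++ l'); rewrite big_cat. Qed.

Lemma sos_eltMsqr (a s : A) : is_sos_elt s -> is_sos_elt (a ^+ 2 * s).
Proof.
move=> [l ->]; exists [seq a * x | x <- l]; rewrite big_map mulr_sumr.
by apply: eq_bigr => x _; rewrite exprMn.
Qed.

Variable n : nat.

Lemma sos_mx0 : is_sos_mx (0 : 'M[A]_n).
Proof. by exists 0%N, 0; rewrite mulmx0. Qed.

Lemma sos_mxD (N1 N2 : 'M[A]_n) :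
  is_sos_mx N1 -> is_sos_mx N2 -> is_sos_mx (N1 + N2).
Proof.
move=> [m1 [Q1 ->]] [m2 [Q2 ->]]; exists (m1 + m2)%N, (col_mx Q1 Q2).
by rewrite tr_col_mx mul_row_col.
Qed.

Lemma sos_mxZsqr (a : A) (N : 'M[A]_n) : is_sos_mx N -> is_sos_mx (a ^+ 2 *: N).
Proof.
move=> [m [Q ->]]; exists m, (a *: Q).
by rewrite [(a *: Q)^T]linearZ /= -scalemxAl -scalemxAr scalerA -expr2.
Qed.

Lemma sos_mx_outer (v : 'cV[A]_n) : is_sos_mx (v *m v^T).
Proof. by exists 1%N, v^T; rewrite trmxK. Qed.

Lemma sos_mx_sym (N : 'M[A]_n) : is_sos_mx N -> is_symmx N.
Proof. by move=> [m [Q ->]]; rewrite /is_symmx trmx_mul trmxK. Qed.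

End SumsOfSquares.

Section SigmaModule.
Variables (A : comPzRingType) (n : nat) (M : 'M[A]_n).

Lemma Sigma0 : Sigma M 0.
Proof.
exists 0, 0; split; [exact: sos_elt0 | exact/sos_mx_sym/sos_mx0 | exact: sos_mx0 |].
by rewrite scale0r mul0mx addr0.
Qed.

Lemma SigmaD (v w : 'cV[A]_n) : Sigma M v -> Sigma M w -> Sigma M (v + w).
Proof.
move=> [s1 [N1 [sos_s1 _ sos_N1 def_v]]] [s2 [N2 [sos_s2 _ sos_N2 def_w]]].
have sos_N : is_sos_mx ((v - w) *m (v - w)^T + (N1 + N2) *+ 2).
  by rewrite mulr2n; do !apply: sos_mxD => //; exact: sos_mx_outer.
exists ((s1 + s2) *+ 2), ((v - w) *m (v - w)^T + (N1 + N2) *+ 2); split => //.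
- by rewrite mulr2n; do !apply: sos_eltD.
- exact: sos_mx_sym.
rewrite -scalerMnl scalerDl def_v def_w [RHS]addrA outer_parallelogram -mulrnDl.
by rewrite addrACA.
Qed.

Lemma SigmaZ (a : A) (v : 'cV[A]_n) : Sigma M v -> Sigma M (a *: v).
Proof.
move=> [s [N [sos_s _ sos_N def_v]]].
exists (a ^+ 2 * s), (a ^+ 2 *: N); split.
- exact: sos_eltMsqr.
- exact/sos_mx_sym/sos_mxZsqr.
- exact: sos_mxZsqr.
rewrite -scalerA def_v scalerDr [(a *: v)^T]linearZ /= -scalemxAl -scalemxAr scalerA.
by rewrite -expr2.
Qed.

End SigmaModule.

Theorem lemma3p7 (A : comPzRingType) (n : nat) (M : 'M[A]_n) :
  is_symmx M -> is_submodule (Sigma M).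
Proof.
move=> _; split; [exact: Sigma0 | exact: SigmaD | exact: SigmaZ].
Qed.
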